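(* Let $G$ be a finite nilpotent group and $H$ an arbitrary finite group with $|G|=|H|$. Then $C(G)\cong C(H)$ if and only if $H$ is nilpotent and, for every prime $p$, $C(G_p)\cong C(H_p)$, where $G_p$ and $H_p$ denote the Sylow $p$-subgroups of $G$ and $H$, respectively.
   Context: All groups are finite. For a group $X$, let $\mathrm{Cyc}(X)=\{x\in X : \langle x,y\rangle \text{ is cyclic for all } y\in X\}$. The cyclic graph $C(X)$ is the simple graph with vertex set $X\setminus \mathrm{Cyc}(X)$ in which two distinct vertices $x,y$ are adjacent iff $\langle x,y\rangle$ is cyclic. *)

From mathcomp Require Import all_boot all_fingroup all_solvable.
Set Implicit Arguments. Unset Strict Implicit. Unset Printing Implicit Defensive.
Local Open Scope group_scope.

Definition Cyc (gT : finGroupType) (X : {set gT}) : {set gT} :=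
  [set x in X | [forall y in X, cyclic <<[set x; y]>>]].

Definition cyc_vertices (gT : finGroupType) (X : {set gT}) : {set gT} :=
  X :\: Cyc X.

Definition cyc_adj (gT : finGroupType) (X : {set gT}) (x y : gT) : bool :=
  [&& x \in cyc_vertices X, y \in cyc_vertices X, x != y &
      cyclic <<[set x; y]>>].

Definition cyc_graph_iso (gT hT : finGroupType) (X : {set gT}) (Y : {set hT})
  : Prop :=
  exists f : gT -> hT,
    [/\ {in cyc_vertices X &, injective f},
        f @: cyc_vertices X = cyc_vertices Y &
        {in cyc_vertices X &, forall x y, cyc_adj Y (f x) (f y) = cyc_adj X x y}].

(* Since |G| = |H|, the sets Cyc(G) and Cyc(H) of universal vertices have the
   same size, so an isomorphism C(G) ~ C(H) extends to a bijection G -> H that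
   preserves the relation "<x, y> is cyclic".  For such a bijection the elements
   whose closed neighbourhood contains that of x form a cyclic subgroup D(x), and
   the number of elements of order d among the u with D(u) = D(x) can be read
   off the relation; rematching inside these classes makes the bijection
   order-preserving.  It then maps the p-elements of G, which form its Sylow
   p-subgroup, onto those of H.  So H has exactly |H|_p elements of p-power
   order for every p, its Sylow subgroups are normal, H is nilpotent, and the
   bijection restricts to the Sylow subgroups.  Conversely, in a nilpotent group
   <x, y> is cyclic iff every <x_p, y_p> is, so isomorphisms between the Sylow
   subgroups glue along the primary decomposition x = prod_p x_p. *)

From mathcomp Require Import all_boot all_fingroup all_solvable.
From Stdlib Require Import ClassicalEpsilon.
Set Implicit Arguments. Unset Strict Implicit. Unset Printing Implicit Defensive.
Local Open Scope group_scope.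

Lemma imsetS_inj (aT rT : finType) (f : aT -> rT) (D A B : {set aT}) :
  {in D &, injective f} -> A \subset D -> B \subset D ->
  (f @: A \subset f @: B) = (A \subset B).
Proof.
move=> injf sAD sBD; apply/idP/idP => [sfAB | ]; last exact: imsetS.
apply/subsetP => a aA; have /imsetP[b bB eab] := subsetP sfAB _ (imset_f f aA).
by rewrite (injf _ _ (subsetP sAD a aA) (subsetP sBD b bB) eab).
Qed.

Lemma fiber_matching (aT bT : finType) (C : eqType) (b0 : bT)
    (f : aT -> C) (g : bT -> C) (A : {set aT}) (B : {set bT}) :
  (forall c, #|[set a in A | f a == c]| = #|[set b in B | g b == c]|) ->
  exists2 h : aT -> bT, {in A &, injective h} &
    h @: A = B /\ {in A, forall a, g (h a) = f a}.
Proof.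
pose FA c := [set a in A | f a == c]; pose FB c := [set b in B | g b == c].
move=> eq_fib; have {}eq_fib c : size (enum (FA c)) = size (enum (FB c)).
  by rewrite -!cardE eq_fib.
pose h a := nth b0 (enum (FB (f a))) (index a (enum (FA (f a)))).
have hFB a : a \in A -> h a \in FB (f a).
  move=> aA; rewrite -mem_enum mem_nth // -eq_fib index_mem mem_enum inE aA /=.
  exact: eqxx.
have hB a : a \in A -> h a \in B /\ g (h a) = f a.
  by move/hFB; rewrite inE => /andP[-> /eqP].
exists h; last split; last by move=> a /hB[].
- move=> a a' aA a'A eq_h; have efa : f a = f a'.
    by case: (hB a aA) (hB a' a'A) => _ <- [_ <-]; congr g.
  move: eq_h; rewrite /h -efa; move/eqP; rewrite nth_uniq ?enum_uniq //; last first.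
  + by rewrite -eq_fib index_mem mem_enum inE a'A efa eqxx.
  + by rewrite -eq_fib index_mem mem_enum inE aA eqxx.
  move/eqP/(congr1 (nth a (enum (FA (f a))))).
  rewrite !nth_index ?mem_enum ?inE ?aA ?a'A ?efa ?eqxx //.
apply/setP => b; apply/imsetP/idP => [[a /hB[haB _] ->] // | bB].
have bFB : b \in enum (FB (g b)) by rewrite mem_enum inE bB eqxx.
have ltb : index b (enum (FB (g b))) < size (enum (FA (g b))).
  by rewrite eq_fib index_mem.
have [a0 a0FA] : exists a0, a0 \in enum (FA (g b)).
  by case: (enum (FA (g b))) ltb => // a0 s _; exists a0; rewrite mem_head.
set a := nth a0 (enum (FA (g b))) (index b (enum (FB (g b)))).
have aFA : a \in FA (g b) by rewrite -mem_enum mem_nth.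
move: aFA; rewrite inE => /andP[aA /eqP fa]; exists a => //.
by rewrite /h fa index_uniq ?enum_uniq // nth_index.
Qed.

Lemma eq_card_bij (aT bT : finType) (b0 : bT) (A : {set aT}) (B : {set bT}) :
  #|A| = #|B| -> exists2 h : aT -> bT, {in A &, injective h} & h @: A = B.
Proof.
have setIdT (T : finType) (S : {set T}) : [set z in S | tt == tt] = S.
  by apply/setP => z; rewrite inE andbT.
move=> eqAB.
have [|h injh [hA _]] :=
  fiber_matching b0 (f := fun=> tt) (g := fun=> tt) (A := A) (B := B).
  by case; rewrite !setIdT.
by exists h.
Qed.

Section CyclicPair.
Variable T : finGroupType.
Implicit Types (x y z u v : T) (G K : {group T}).

Definition cyclic_pair x y := cyclic <<[set x; y]>>.

Lemma cyclic_pairC x y : cyclic_pair x y = cyclic_pair y x.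
Proof. by rewrite /cyclic_pair setUC. Qed.

Lemma cyclic_pair_refl x : cyclic_pair x x.
Proof. by rewrite /cyclic_pair setUid cycle_cyclic. Qed.

Lemma cyclic_pair_commute x y : cyclic_pair x y -> commute x y.
Proof.
by move/cyclic_abelian/centsP; apply; rewrite mem_gen // (set21, set22).
Qed.

Lemma cyclic_pair_cyclel u x y : x \in <[u]> -> cyclic_pair u y -> cyclic_pair x y.
Proof.
have su : <[u]> \subset <<[set u; y]>> by rewrite cycle_subG mem_gen ?set21.
move=> xu; apply: cyclicS; rewrite gen_subG subUset !sub1set (subsetP su) //.
by rewrite mem_gen ?set22.
Qed.

Lemma cyclic_pair_cycle u v x y :
  x \in <[u]> -> y \in <[v]> -> cyclic_pair u v -> cyclic_pair x y.
Proof.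
move=> xu yv /(cyclic_pair_cyclel xu); rewrite cyclic_pairC => /(cyclic_pair_cyclel yv).
by rewrite cyclic_pairC.
Qed.

Lemma cyclic_pair1 y : cyclic_pair 1 y.
Proof. exact: cyclic_pair_cyclel (group1 _) (cyclic_pair_refl y). Qed.

Lemma cyclic_pair_constt pi x y : cyclic_pair x y -> cyclic_pair x.`_pi y.`_pi.
Proof. by apply: cyclic_pair_cycle; apply: cycle_constt. Qed.

Lemma cyclic_pairwise K : {in K &, forall x y, cyclic_pair x y} -> cyclic K.
Proof.
(* An element g of maximal order generates K: if <u, g> = <h> then <g> = <h>. *)
move=> cpK; have [g gK maxg] : exists2 g, g \in K & {in K, forall h, #[h] <= #[g]}.
  by case: (@arg_maxnP _ 1 (mem K) (fun g => #[g]) (group1 K)) => g; exists g.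
apply/cyclicP; exists g; apply/eqP; rewrite eqEsubset cycle_subG gK andbT.
apply/subsetP => u uK; have /cyclicP[h defh] := cpK u g uK gK.
have hK : h \in K by rewrite -cycle_subG -defh gen_subG subUset !sub1set uK.
have sgh : <[g]> \subset <[h]> by rewrite -defh cycle_subG mem_gen ?set22.
have -> : <[g]> = <[h]> by apply/eqP; rewrite eqEcard sgh -!orderE maxg.
by rewrite -defh mem_gen ?set21.
Qed.

Lemma constt_nonprime p x : ~~ prime p -> x.`_p = 1.
Proof.
move=> np; apply/constt1P/pnatP => // q q_pr _.
by rewrite !inE; apply: contraNneq np => <-.
Qed.

Lemma constt_order_lt p x : #[x] < p -> x.`_p = 1.
Proof.
move=> lt_xp; apply/constt1P/pnatP => // q _ /(dvdn_leq (order_gt0 x)) le_qx.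
by rewrite !inE neq_ltn (leq_ltn_trans le_qx).
Qed.

Lemma constt_notin_pi G p x : x \in G -> p \notin \pi(G) -> x.`_p = 1.
Proof.
move=> xG pG; apply/constt1P; apply: pnat_dvd (order_dvdG xG) _.
by rewrite p'natEpi.
Qed.

Lemma prod_constt_gt x n : #[x] < n -> \prod_(0 <= p < n) x.`_p = x.
Proof.
move=> lt_xn; rewrite (big_cat_nat (leq0n #[x].+1) lt_xn) /= prod_constt.
rewrite big_nat_cond big1 ?mulg1 // => p /andP[/andP[lt_xp _] _].
exact: constt_order_lt.
Qed.

Lemma constt_inj x y : (forall p, prime p -> x.`_p = y.`_p) -> x = y.
Proof.
move=> eq_xy; pose n := (maxn #[x] #[y]).+1.
rewrite -(@prod_constt_gt x n) ?ltnS ?leq_maxl //.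
rewrite -(@prod_constt_gt y n) ?ltnS ?leq_maxr //.
apply: eq_bigr => p _; have [/eq_xy //|np] := boolP (prime p).
by rewrite !constt_nonprime.
Qed.

Lemma mem_constt G pi x : x \in G -> x.`_pi \in G.
Proof. exact: groupX. Qed.

Lemma commute_constt_cyclic_pair x y :
  commute x y -> (forall p, prime p -> cyclic_pair x.`_p y.`_p) -> cyclic_pair x y.
Proof.
(* <x, y> is abelian, and each of its Sylow p-subgroups lies in <x_p, y_p>. *)
move=> cxy cp_xy.
have defA : <<[set x; y]>> = <[x]> * <[y]>.
  by rewrite -cent_joinEl ?cents_cycle // joing_idl joing_idr.
apply: nil_Zgroup_cyclic; last first.
  apply: abelian_nil; rewrite abelian_gen; apply/centsP => a.
  by rewrite !inE => /orP[]/eqP-> b; rewrite !inE => /orP[]/eqP->.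
apply/forall_inP => V /SylowP[p p_pr sylV]; apply: cyclicS (cp_xy p p_pr).
apply/subsetP => u Vu; have pu := mem_p_elt (pHall_pgroup sylV) Vu.
rewrite -(constt_p_elt pu); have := subsetP (pHall_sub sylV) u Vu.
rewrite /= defA => /mulsgP[_ _ /cycleP[i ->] /cycleP[j ->] ->].
rewrite consttM ?consttX; last exact: commuteX2.
have xA : x.`_p \in <<[set x.`_p; y.`_p]>> by rewrite mem_gen ?set21.
have yA : y.`_p \in <<[set x.`_p; y.`_p]>> by rewrite mem_gen ?set22.
by rewrite groupM // groupX.
Qed.

Lemma p_elt_cyclic_pair_cycle (p : nat) u v :
  p.-elt u -> p.-elt v -> cyclic_pair u v -> (u \in <[v]>) || (v \in <[u]>).
Proof.
move=> pu pv cp_uv; have [i oi] := p_natP pu; have [j oj] := p_natP pv.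
have su : <[u]> \subset <<[set u; v]>> by rewrite cycle_subG mem_gen ?set21.
have sv : <[v]> \subset <<[set u; v]>> by rewrite cycle_subG mem_gen ?set22.
rewrite -!cycle_subG -(cardSg_cyclic cp_uv su sv) -(cardSg_cyclic cp_uv sv su).
rewrite -!orderE oi oj.
by case/orP: (leq_total i j) => [/dvdn_exp2l-> | /dvdn_exp2l->]; rewrite ?orbT.
Qed.

Lemma cyclic_pairM x y z :
  cyclic_pair x y -> cyclic_pair x z -> cyclic_pair y z -> cyclic_pair (x * y) z.
Proof.
move=> cp_xy cp_xz cp_yz; apply: commute_constt_cyclic_pair => [|p _].
  by apply/commute_sym/commuteM; apply/commute_sym/cyclic_pair_commute.
rewrite consttM; last exact: cyclic_pair_commute.
have := p_elt_cyclic_pair_cycle (p_elt_constt p x) (p_elt_constt p y).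
case/(_ (cyclic_pair_constt p cp_xy))/orP => [xy | yx].
  by apply: cyclic_pair_cyclel (cyclic_pair_constt p cp_yz); rewrite groupM ?cycle_id.
by apply: cyclic_pair_cyclel (cyclic_pair_constt p cp_xz); rewrite groupM ?cycle_id.
Qed.

Lemma nil_p_p'_elt_commute G pi x y : nilpotent G -> x \in G -> y \in G ->
  pi.-elt x -> pi^'.-elt y -> commute x y.
Proof.
move=> nilG xG yG pix piy; have /dprodP[_ _ cOO _] := nilpotent_pcoreC pi nilG.
have memO rho z : z \in G -> rho.-elt z -> z \in 'O_rho(G).
  by move=> zG; rewrite (mem_normal_Hall (nilpotent_pcore_Hall rho nilG)) ?pcore_normal.
by apply/commute_sym/(centsP cOO); apply: memO.
Qed.

Lemma cyclic_pair_nilP G x y : nilpotent G -> x \in G -> y \in G ->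
  reflect (forall p, prime p -> cyclic_pair x.`_p y.`_p) (cyclic_pair x y).
Proof.
move=> nilG xG yG; apply: (iffP idP) => [cp_xy p _ | cp_xy].
  exact: cyclic_pair_constt.
suff cxy : commute x y by apply: commute_constt_cyclic_pair.
apply: commute_sym; rewrite -(prod_constt x); apply: commute_prod => p _.
apply: commute_sym; have [p_pr | np] := boolP (prime p); last first.
  by rewrite constt_nonprime //; apply/commute_sym/commute1.
rewrite -(consttC p y); apply: commuteM.
  exact: cyclic_pair_commute (cp_xy p p_pr).
by apply: nil_p_p'_elt_commute nilG _ _ (p_elt_constt p x) (p_elt_constt _ y);
  rewrite mem_constt.
Qed.

End CyclicPair.

Lemma card_order_cyclic (gT hT : finGroupType) (G : {group gT}) (H : {group hT}) d :
  cyclic G -> cyclic H -> #|G| = #|H| ->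
  #|[set x in G | #[x] == d]| = #|[set y in H | #[y] == d]|.
Proof.
move=> cG cH eGH.
have /isogP[f injf fG] : G \isog H by rewrite isog_cyclic_card // cH eGH eqxx.
have -> : [set y in H | #[y] == d] = f @: [set x in G | #[x] == d].
  apply/setP => y; apply/setIdP/imsetP => [[] | [x /setIdP[xG ox] ->]].
    rewrite -fG => /morphimP[x _ xG ->].
    by exists x; rewrite ?inE -?(order_injm injf) ?xG.
  by rewrite -fG mem_morphim ?(order_injm injf xG).
by rewrite card_in_imset //; apply: sub_in2 (injmP injf) => x /setIdP[].
Qed.

Lemma in_Cyc (T : finGroupType) (Z : {set T}) x :
  (x \in Cyc Z) = (x \in Z) && [forall y in Z, cyclic_pair x y].
Proof. by rewrite inE. Qed.

Lemma Cyc_sub (T : finGroupType) (Z : {set T}) : Cyc Z \subset Z.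
Proof. by apply/subsetP => x /setIdP[]. Qed.

Lemma Cyc_cyclic_pair (T : finGroupType) (Z : {set T}) x y :
  x \in Cyc Z -> y \in Z -> cyclic_pair x y.
Proof. by rewrite in_Cyc => /andP[_ /forall_inP]; apply. Qed.

Definition cyclic_pair_iso (gT hT : finGroupType) (X : {set gT}) (Y : {set hT})
    (f : gT -> hT) :=
  [/\ {in X &, injective f}, f @: X = Y &
      {in X &, forall x y, cyclic_pair (f x) (f y) = cyclic_pair x y}].

Section PairIsoSets.
Variables (gT hT : finGroupType) (X : {set gT}) (Y : {set hT}) (f : gT -> hT).
Hypothesis isof : cyclic_pair_iso X Y f.

Lemma pair_iso_mem x : x \in X -> f x \in Y.
Proof. by case: isof => _ <- _ xX; apply: imset_f. Qed.

Lemma pair_iso_Cyc x : x \in X -> (f x \in Cyc Y) = (x \in Cyc X).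
Proof.
case: isof => _ fX cpf xX; rewrite !in_Cyc pair_iso_mem // xX /=.
apply/forall_inP/forall_inP => cpx y.
  by move=> yX; rewrite -cpf ?cpx ?pair_iso_mem.
by rewrite -fX => /imsetP[z zX ->]; rewrite cpf ?cpx.
Qed.

Lemma pair_iso_vertices x :
  x \in X -> (f x \in cyc_vertices Y) = (x \in cyc_vertices X).
Proof. by move=> xX; rewrite !in_setD pair_iso_Cyc ?pair_iso_mem ?xX. Qed.

Lemma cyc_graph_iso_of_pair_iso : cyc_graph_iso X Y.
Proof.
have sVX : cyc_vertices X \subset X by apply: subsetDl.
case: isof => injf fX cpf; exists f; split.
- by apply: sub_in2 injf; apply/subsetP.
- apply/setP => y; apply/imsetP/idP => [[x xV ->] | yV].
    by rewrite pair_iso_vertices ?(subsetP sVX).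
  have := subsetP (subsetDl Y (Cyc Y)) y yV; rewrite -fX => /imsetP[x xX eyx].
  by exists x => //; rewrite -pair_iso_vertices // -eyx.
move=> x y xV yV; have [xX yX] := (subsetP sVX x xV, subsetP sVX y yV).
rewrite /cyc_adj !pair_iso_vertices // xV yV (inj_in_eq injf) //.
by rewrite -/(cyclic_pair _ _) cpf.
Qed.

Lemma pair_isoS (A : {set gT}) : A \subset X -> cyclic_pair_iso A (f @: A) f.
Proof.
case: isof => injf _ cpf sAX; split=> //; first by apply: sub_in2 injf; apply/subsetP.
by apply: sub_in2 cpf; apply/subsetP.
Qed.

End PairIsoSets.

Section GraphIsoExtension.
Variables (gT hT : finGroupType) (X : {set gT}) (Y : {set hT}) (f h : gT -> hT).
Hypotheses (injf : {in cyc_vertices X &, injective f})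
           (fV : f @: cyc_vertices X = cyc_vertices Y)
           (adjf : {in cyc_vertices X &,
                      forall x y, cyc_adj Y (f x) (f y) = cyc_adj X x y})
           (injh : {in Cyc X &, injective h}) (hC : h @: Cyc X = Cyc Y).

Let phi x := if x \in Cyc X then h x else f x.

Let f_vertex x : x \in X -> x \notin Cyc X -> f x \in cyc_vertices Y.
Proof. by move=> xX xC; rewrite -fV imset_f // in_setD xC. Qed.

Let phi_Cyc x : x \in X -> (phi x \in Cyc Y) = (x \in Cyc X).
Proof.
move=> xX; rewrite /phi; case: ifPn => xC; first by rewrite -hC imset_f.
by case/setDP: (f_vertex xX xC) => _ /negbTE.
Qed.

Let phi_mem x : x \in X -> phi x \in Y.
Proof.
move=> xX; rewrite /phi; case: ifPn => xC.
  by apply: (subsetP (Cyc_sub Y)); rewrite -hC imset_f.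
exact: (subsetP (subsetDl Y (Cyc Y))) (f_vertex xX xC).
Qed.

Lemma pair_iso_extension : cyclic_pair_iso X Y phi.
Proof.
split.
- move=> x y xX yX eq_phi.
  have eqC : (x \in Cyc X) = (y \in Cyc X) by rewrite -phi_Cyc // eq_phi phi_Cyc.
  move: eq_phi; rewrite /phi -eqC; case: ifPn => xC.
    by apply: injh; rewrite -?eqC.
  by apply: injf; rewrite in_setD ?xX ?yX -?eqC xC.
- apply/setP => y; apply/imsetP/idP => [[x xX ->] | yY]; first exact: phi_mem.
  have [yC | yC] := boolP (y \in Cyc Y).
    move: yC; rewrite -hC => /imsetP[x xC ->].
    by exists x; rewrite /phi ?xC ?(subsetP (Cyc_sub X)).
  have : y \in f @: cyc_vertices X by rewrite fV in_setD yC.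
  by case/imsetP=> x /setDP[xX xC] ->; exists x; rewrite /phi ?(negbTE xC).
move=> x y xX yX.
have cpC u v : u \in X -> v \in X -> u \in Cyc X ->
    cyclic_pair (phi u) (phi v) = cyclic_pair u v.
  move=> uX vX uC.
  by rewrite (@Cyc_cyclic_pair _ X) ?(@Cyc_cyclic_pair _ Y) ?phi_mem ?phi_Cyc.
have [xC | xC] := boolP (x \in Cyc X); first exact: cpC.
have [yC | yC] := boolP (y \in Cyc X).
  by rewrite cyclic_pairC cpC // cyclic_pairC.
have [-> | ne_xy] := eqVneq x y; first by rewrite !cyclic_pair_refl.
have [xV yV] : x \in cyc_vertices X /\ y \in cyc_vertices X by rewrite !in_setD xC yC.
move: (adjf xV yV).
rewrite /cyc_adj xV yV f_vertex ?f_vertex ?(inj_in_eq injf) //= ne_xy.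
by rewrite /phi (negbTE xC) (negbTE yC).
Qed.

End GraphIsoExtension.

Lemma pair_iso_of_cyc_graph_iso (gT hT : finGroupType) (X : {set gT}) (Y : {set hT}) :
  cyc_graph_iso X Y -> #|X| = #|Y| -> exists f, cyclic_pair_iso X Y f.
Proof.
case=> f [injf fV adjf] eqXY.
have eqC : #|Cyc X| = #|Cyc Y|.
  have cardV : #|cyc_vertices Y| = #|cyc_vertices X| by rewrite -fV card_in_imset.
  move: eqXY; rewrite -(cardsID (Cyc X) X) -(cardsID (Cyc Y) Y) cardV.
  by rewrite (setIidPr (Cyc_sub X)) (setIidPr (Cyc_sub Y)) => /addIn.
have [h injh hC] := eq_card_bij 1 eqC.
by eexists; apply: pair_iso_extension injf fV adjf injh hC.
Qed.

Section Domination.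
Variables (T : finGroupType) (X : {group T}).
Implicit Types x y u v w : T.

Definition cyc_nbhd x := [set y in X | cyclic_pair x y].

Definition cyc_dom x := [set w in X | cyc_nbhd x \subset cyc_nbhd w].

Lemma cyc_nbhd_refl x : x \in X -> x \in cyc_nbhd x.
Proof. by move=> xX; rewrite inE xX cyclic_pair_refl. Qed.

Lemma cyc_nbhd_sub x : cyc_nbhd x \subset X.
Proof. by apply/subsetP => y /setIdP[]. Qed.

Lemma cyc_dom_refl x : x \in X -> x \in cyc_dom x.
Proof. by move=> xX; rewrite inE xX subxx. Qed.

Lemma cyc_dom_sub x : cyc_dom x \subset X.
Proof. by apply/subsetP => w /setIdP[]. Qed.

Lemma cyc_dom_trans x u : u \in cyc_dom x -> cyc_dom u \subset cyc_dom x.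
Proof.
case/setIdP=> _ sxu; apply/subsetP => v /setIdP[vX suv].
by rewrite inE vX (subset_trans sxu suv).
Qed.

Lemma cyc_dom_nbhd x w : x \in X -> w \in cyc_dom x -> w \in cyc_nbhd x.
Proof.
move=> xX /setIdP[wX /subsetP/(_ x (cyc_nbhd_refl xX))].
by rewrite !inE xX wX cyclic_pairC.
Qed.

Lemma cyc_dom_cyclic_pair x w w' :
  x \in X -> w \in cyc_dom x -> w' \in cyc_dom x -> cyclic_pair w w'.
Proof.
move=> xX /setIdP[_ /subsetP sxw] /(cyc_dom_nbhd xX)/sxw.
by case/setIdP.
Qed.

Lemma group_set_cyc_dom x : x \in X -> group_set (cyc_dom x).
Proof.
move=> xX; apply/group_setP; split=> [|w w' wD w'D].
  by rewrite inE group1; apply/subsetP => y /setIdP[yX _]; rewrite inE yX cyclic_pair1.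
have [wX w'X] := (subsetP (cyc_dom_sub x) w wD, subsetP (cyc_dom_sub x) w' w'D).
rewrite inE groupM //=; apply/subsetP => y yN.
have /setIdP[yX cp_wy] := subsetP (setIdP wD).2 y yN.
have /setIdP[_ cp_w'y] := subsetP (setIdP w'D).2 y yN.
by rewrite inE yX cyclic_pairM // (cyc_dom_cyclic_pair xX wD w'D).
Qed.

Definition cyc_dom_group x (xX : x \in X) := Group (group_set_cyc_dom xX).

Lemma cyclic_cyc_dom x (xX : x \in X) : cyclic (cyc_dom_group xX).
Proof. by apply: cyclic_pairwise => w w'; apply: cyc_dom_cyclic_pair. Qed.

Lemma order_dvd_cyc_dom x (xX : x \in X) : #[x] %| #|cyc_dom x|.
Proof. exact: (order_dvdG (cyc_dom_refl xX : x \in cyc_dom_group xX)). Qed.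

Lemma cyc_nbhd_dom_eq u u' : u \in X -> u' \in X ->
  cyc_dom u = cyc_dom u' -> cyc_nbhd u = cyc_nbhd u'.
Proof.
move=> uX u'X eq_D; apply/eqP; rewrite eqEsubset.
have /setIdP[_ ->] : u' \in cyc_dom u by rewrite eq_D cyc_dom_refl.
by have /setIdP[_ ->] : u \in cyc_dom u' by rewrite -eq_D cyc_dom_refl.
Qed.

Lemma mem_cyc_dom_dvd x u v : x \in X -> u \in cyc_dom x -> v \in cyc_dom x ->
  #[u] %| #|cyc_dom v| -> u \in cyc_dom v.
Proof.
move=> xX uD vD; have vX := subsetP (cyc_dom_sub x) v vD.
have sDv : cyc_dom_group vX \subset cyc_dom_group xX := cyc_dom_trans vD.
have su : <[u]> \subset cyc_dom_group xX by rewrite cycle_subG.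
by rewrite orderE (cardSg_cyclic (cyclic_cyc_dom xX) su sDv) cycle_subG.
Qed.

Definition cyc_twins_of_order x d :=
  [set u in X | (cyc_dom u == cyc_dom x) && (#[u] == d)].

Definition dom_order_free x d :=
  [forall v in cyc_dom x, (cyc_dom v != cyc_dom x) ==> ~~ (d %| #|cyc_dom v|)].

(* An element of order d of the cyclic group cyc_dom x is a twin of x unless it
   lies in a strictly smaller cyc_dom v, which happens iff d divides its order. *)
Lemma card_cyc_twins_of_order x d : x \in X ->
  #|cyc_twins_of_order x d| =
    if dom_order_free x d then #|[set u in cyc_dom x | #[u] == d]| else 0.
Proof.
move=> xX; case: ifPn => [/forall_inP free | /forall_inPn[v vD]].
  apply: eq_card => u; apply/setIdP/setIdP => [[uX /andP[/eqP<- ->]] | [uD ou]].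
    by rewrite cyc_dom_refl.
  have uX := subsetP (cyc_dom_sub x) u uD; split=> //; rewrite ou andbT.
  apply: contraTT ou => ne_D.
  have /implyP/(_ ne_D) := free u uD; apply: contra => /eqP <-.
  exact: order_dvd_cyc_dom.
rewrite negb_imply negbK => /andP[ne_D dv].
apply/eqP; rewrite cards_eq0; apply/set0Pn => -[u /setIdP[uX /andP[/eqP eq_D /eqP ou]]].
have uDv : u \in cyc_dom v.
  by apply: (mem_cyc_dom_dvd xX) => //; rewrite ?ou // -eq_D cyc_dom_refl.
case/negP: ne_D; rewrite eqEsubset cyc_dom_trans //= -eq_D.
exact: cyc_dom_trans.
Qed.

End Domination.

Section PairIsoGroups.
Variables (gT hT : finGroupType) (X : {group gT}) (Y : {group hT}) (f : gT -> hT).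
Hypothesis isof : cyclic_pair_iso X Y f.

Let injf : {in X &, injective f}. Proof. by case: isof. Qed.
Let fX : f @: X = Y. Proof. by case: isof. Qed.
Let cpf : {in X &, forall x y, cyclic_pair (f x) (f y) = cyclic_pair x y}.
Proof. by case: isof. Qed.

Lemma imset_cyc_nbhd x : x \in X -> cyc_nbhd Y (f x) = f @: cyc_nbhd X x.
Proof.
move=> xX; apply/setP => y; apply/setIdP/imsetP => [[] | [z /setIdP[zX cp_xz] ->]].
  rewrite -fX => /imsetP[z zX ->]; rewrite cpf // => cp_xz.
  by exists z; rewrite ?inE ?zX.
by rewrite (pair_iso_mem isof) // cpf.
Qed.

Lemma imset_cyc_dom x : x \in X -> cyc_dom Y (f x) = f @: cyc_dom X x.
Proof.
move=> xX; apply/setP => y; apply/setIdP/imsetP => [[] | [z /setIdP[zX sxz] ->]].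
  rewrite -fX => /imsetP[z zX ->].
  rewrite !imset_cyc_nbhd // (imsetS_inj injf) ?cyc_nbhd_sub // => sxz.
  by exists z; rewrite ?inE ?zX.
by rewrite (pair_iso_mem isof) // !imset_cyc_nbhd // (imsetS_inj injf) ?cyc_nbhd_sub.
Qed.

Lemma card_cyc_dom_iso x : x \in X -> #|cyc_dom Y (f x)| = #|cyc_dom X x|.
Proof.
move=> xX; rewrite imset_cyc_dom // card_in_imset //.
by apply: sub_in2 injf; apply/subsetP/cyc_dom_sub.
Qed.

Lemma eq_cyc_dom_iso u x : u \in X -> x \in X ->
  (cyc_dom Y (f u) == cyc_dom Y (f x)) = (cyc_dom X u == cyc_dom X x).
Proof.
move=> uX xX; rewrite !imset_cyc_dom // !eqEsubset.
by rewrite !(imsetS_inj injf) ?cyc_dom_sub.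
Qed.

Lemma dom_order_free_iso x d :
  x \in X -> dom_order_free Y (f x) d = dom_order_free X x d.
Proof.
move=> xX; apply/forall_inP/forall_inP => free v; last first.
  rewrite {1}imset_cyc_dom // => /imsetP[u uD ->].
  have uX := subsetP (cyc_dom_sub X x) u uD.
  by rewrite eq_cyc_dom_iso // card_cyc_dom_iso //; apply: free.
move=> vD; have vX := subsetP (cyc_dom_sub X x) v vD.
rewrite -eq_cyc_dom_iso // -card_cyc_dom_iso //; apply: free.
by rewrite imset_cyc_dom // imset_f.
Qed.

Lemma card_cyc_twins_of_order_iso x d : x \in X ->
  #|cyc_twins_of_order Y (f x) d| = #|cyc_twins_of_order X x d|.
Proof.
move=> xX; have fxY := pair_iso_mem isof xX.
rewrite !card_cyc_twins_of_order // dom_order_free_iso //; case: ifP => // _.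
apply: card_order_cyclic (cyclic_cyc_dom fxY) (cyclic_cyc_dom xX) _.
exact: card_cyc_dom_iso.
Qed.

End PairIsoGroups.

Lemma pair_iso_preserving_order (gT hT : finGroupType)
    (X : {group gT}) (Y : {group hT}) phi :
  cyclic_pair_iso X Y phi ->
  exists2 psi, cyclic_pair_iso X Y psi & {in X, forall x, #[psi x] = #[x]}.
Proof.
move=> isophi; have [_ phiX cpphi] := isophi; have phiY := pair_iso_mem isophi.
pose key_X x := (cyc_dom Y (phi x), #[x]); pose key_Y y := (cyc_dom Y y, #[y]).
have [|psi injpsi [psiX key_psi]] :=
  fiber_matching 1 (f := key_X) (g := key_Y) (A := X) (B := Y).
  case=> D d.
  have [/exists_inP[x xX /eqP <-] | noD] :=
    boolP [exists x in X, cyc_dom Y (phi x) == D].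
    transitivity #|cyc_twins_of_order X x d|.
      apply: eq_card => u; rewrite !inE xpair_eqE.
      by case uX : (u \in X); rewrite //= (eq_cyc_dom_iso isophi).
    by rewrite -(card_cyc_twins_of_order_iso isophi) //; apply: eq_card.
  rewrite !eq_card0 // => [y | x]; rewrite !inE xpair_eqE;
    apply/and3P => -[+ /eqP eqD _].
    rewrite -phiX => /imsetP[x xX eyx].
    by case/exists_inP: noD; exists x; rewrite -?eyx ?eqD.
  by move=> xX; case/exists_inP: noD; exists x; rewrite ?eqD.
have psiY x : x \in X -> psi x \in Y by move=> xX; rewrite -psiX imset_f.
exists psi => [|x /key_psi[] //]; split=> // x y xX yX.
have cp_psi u w : u \in X -> w \in Y -> cyclic_pair (psi u) w = cyclic_pair (phi u) w.
  move=> uX wY; have [eqD _] := key_psi u uX.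
  have /setP/(_ w) := cyc_nbhd_dom_eq (psiY u uX) (phiY u uX) eqD.
  by rewrite !inE wY.
by rewrite cp_psi ?psiY // cyclic_pairC cp_psi ?phiY // cyclic_pairC cpphi.
Qed.

Section PiElements.
Variables (T : finGroupType) (G : {group T}) (pi : nat_pred).

Definition pi_elts := [set x in G | pi.-elt x].

Lemma pi_elts_sub : pi_elts \subset G.
Proof. by apply/subsetP => x /setIdP[]. Qed.

Lemma pi_elts_nil : nilpotent G -> pi_elts = 'O_pi(G).
Proof.
move=> nilG; apply/setP => x; rewrite inE; have [xG | xG] := boolP (x \in G).
  by rewrite (mem_normal_Hall (nilpotent_pcore_Hall pi nilG)) ?pcore_normal.
by apply/esym/negbTE; apply: contra xG; apply/subsetP/pcore_sub.
Qed.

Lemma card_pi_elts_nil : nilpotent G -> #|pi_elts| = (#|G|`_pi)%N.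
Proof.
by move=> nilG; rewrite pi_elts_nil // (card_Hall (nilpotent_pcore_Hall pi nilG)).
Qed.

Lemma Hall_pi_elts (Q : {group T}) :
  pi.-Hall(G) Q -> #|pi_elts| = (#|G|`_pi)%N -> Q :=: pi_elts.
Proof.
move=> hallQ card_elts; apply/eqP.
rewrite eqEcard card_elts (card_Hall hallQ) leqnn andbT.
apply/subsetP => x xQ; rewrite inE (subsetP (pHall_sub hallQ)) //=.
exact: mem_p_elt (pHall_pgroup hallQ) xQ.
Qed.

End PiElements.

Lemma nilpotent_card_p_elts (T : finGroupType) (G : {group T}) :
  (forall p, prime p -> #|pi_elts G p| = (#|G|`_p)%N) -> nilpotent G.
Proof.
move=> card_elts; apply: (nilpotentS _ (Fitting_nil G)); apply/subsetP => x xG.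
rewrite -(prod_constt x); apply: group_prod => p _.
have [p_pr | np] := boolP (prime p); last by rewrite constt_nonprime.
have [Q sylQ] := Sylow_exists p G.
have defQ : Q :=: pi_elts G p := Hall_pi_elts sylQ (card_elts p p_pr).
have nQG : Q <| G.
  rewrite /normal (pHall_sub sylQ); apply/normsP => y yG.
  have sylQy : p.-Sylow(G) (Q :^ y)%G by rewrite pHallJ.
  by rewrite [LHS](Hall_pi_elts sylQy (card_elts p p_pr)) defQ.
apply: subsetP (Fitting_max nQG (pgroup_nil (pHall_pgroup sylQ))) _ _.
by rewrite defQ inE mem_constt ?p_elt_constt.
Qed.

Lemma imset_pi_elts (gT hT : finGroupType) (X : {group gT}) (Y : {group hT}) f pi :
  f @: X = Y -> {in X, forall x, #[f x] = #[x]} -> f @: pi_elts X pi = pi_elts Y pi.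
Proof.
move=> fX ordf; apply/setP => y; apply/imsetP/setIdP => [[x /setIdP[xX pix] ->] | []].
  by rewrite -fX imset_f // /p_elt ordf.
rewrite -fX => /imsetP[x xX ->]; rewrite /p_elt ordf // => pix.
by exists x; rewrite ?inE ?xX.
Qed.

Lemma cyc_graph_iso_nil_Sylow (gT hT : finGroupType) (G : {group gT}) (H : {group hT}) :
  nilpotent G -> #|G| = #|H| -> cyc_graph_iso G H ->
  nilpotent H /\
  forall p, prime p -> forall (P : {group gT}) (Q : {group hT}),
    P \in 'Syl_p(G) -> Q \in 'Syl_p(H) -> cyc_graph_iso P Q.
Proof.
move=> nilG eqGH /pair_iso_of_cyc_graph_iso/(_ eqGH)[phi].
case/pair_iso_preserving_order=> psi isopsi ordpsi.
have [injpsi psiG _] := isopsi.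
have psi_elts p : psi @: pi_elts G p = pi_elts H p by apply: imset_pi_elts.
have card_elts p : #|pi_elts H p| = (#|H|`_p)%N.
  rewrite -psi_elts card_in_imset -?eqGH ?card_pi_elts_nil //.
  by apply: sub_in2 injpsi; apply/subsetP/pi_elts_sub.
split=> [|p _ P Q]; first exact: nilpotent_card_p_elts.
rewrite !inE => sylP sylQ.
have sPG : P \subset G := pHall_sub sylP.
rewrite (Hall_pi_elts sylQ (card_elts p)) -psi_elts.
rewrite -(Hall_pi_elts sylP) ?card_pi_elts_nil //.
exact: cyc_graph_iso_of_pair_iso (pair_isoS isopsi sPG).
Qed.

Lemma constt_prod_pcore (T : finGroupType) (Z : {group T}) (s : seq nat)
    (e : nat -> T) (q : nat) :
  nilpotent Z -> uniq s -> {in s, forall p, e p \in 'O_p(Z)} ->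
  (\prod_(p <- s) e p).`_q = if q \in s then e q else 1.
Proof.
move=> nilZ; elim: s => [|p s IHs] /=; first by rewrite big_nil constt1.
case/andP=> s'p uniq_s eO; have eOs : {in s, forall r, e r \in 'O_r(Z)}.
  by move=> r sr; apply: eO; rewrite inE sr orbT.
have eZ r : r \in p :: s -> e r \in Z by move/eO; apply/subsetP/pcore_sub.
have p_elt_e r : r \in p :: s -> r.-elt (e r).
  by move/eO; apply: mem_p_elt (pcore_pgroup _ _).
have e1 r : r \in p :: s -> r != q -> (e r).`_q = 1.
  move=> sr ne_rq; apply/constt1P; apply: sub_in_pnat (p_elt_e r sr) => t _.
  by rewrite !inE => /eqP->.
rewrite big_cons consttM; last first.
  rewrite big_seq; apply: commute_prod => r sr.
  have psr : r \in p :: s by rewrite inE sr orbT.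
  apply: nil_p_p'_elt_commute nilZ (eZ p (mem_head p s)) (eZ r psr) (p_elt_e p _) _.
    exact: mem_head.
  apply: sub_in_pnat (p_elt_e r psr) => t _; rewrite !inE => /eqP->.
  by apply: contraNneq s'p => <-.
rewrite IHs // inE; have [<- | ne_pq] := eqVneq p q.
  by rewrite (negbTE s'p) constt_p_elt ?mulg1 ?p_elt_e ?mem_head.
by rewrite e1 ?mem_head ?mul1g.
Qed.

Section PrimaryGluing.
Variables (gT hT : finGroupType) (G : {group gT}) (H : {group hT}).
Variable iso : nat -> gT -> hT.
Hypotheses (nilG : nilpotent G) (nilH : nilpotent H) (eqGH : #|G| = #|H|).
Hypothesis isoP : forall p, prime p -> cyclic_pair_iso 'O_p(G) 'O_p(H) (iso p).

Definition glue x := \prod_(p <- primes #|G|) iso p x.`_p.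

Let constt_pcore x pi : x \in G -> x.`_pi \in 'O_pi(G).
Proof. by move=> xG; rewrite -pi_elts_nil // inE mem_constt ?p_elt_constt. Qed.

Let iso_pcore x p : x \in G -> prime p -> iso p x.`_p \in 'O_p(H).
Proof. by move=> xG p_pr; rewrite (pair_iso_mem (isoP p_pr)) ?constt_pcore. Qed.

Lemma glue_constt x q : x \in G -> prime q -> (glue x).`_q = iso q x.`_q.
Proof.
move=> xG q_pr; rewrite (constt_prod_pcore _ nilH) ?primes_uniq //; last first.
  by move=> p; rewrite mem_primes => /and3P[p_pr _ _]; apply: iso_pcore.
case: ifPn => // qG; have qH : q \notin \pi(H) by rewrite /= -eqGH.
rewrite (constt_notin_pi xG) //.
have /setIdP[yH qy] : iso q 1 \in pi_elts H q.
  by rewrite pi_elts_nil // -(@constt1 gT q) iso_pcore.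
by rewrite -(constt_p_elt qy) (constt_notin_pi yH).
Qed.

Lemma glue_mem x : x \in G -> glue x \in H.
Proof.
move=> xG; rewrite /glue big_seq; apply: group_prod => p.
rewrite mem_primes => /and3P[p_pr _ _].
exact: subsetP (pcore_sub p H) _ (iso_pcore xG p_pr).
Qed.

Lemma glue_pair_iso : cyclic_pair_iso G H glue.
Proof.
have injg : {in G &, injective glue}.
  move=> x y xG yG eq_g; apply: constt_inj => q q_pr.
  have [injq _ _] := isoP q_pr; apply: injq; rewrite ?constt_pcore //.
  by rewrite -!glue_constt // eq_g.
split=> //.
  apply/eqP; rewrite eqEcard card_in_imset // -eqGH leqnn andbT.
  by apply/subsetP => _ /imsetP[x xG ->]; apply: glue_mem.
move=> x y xG yG.
have cp_q q :
    prime q -> cyclic_pair (glue x).`_q (glue y).`_q = cyclic_pair x.`_q y.`_q.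
  move=> q_pr; have [_ _ cpq] := isoP q_pr.
  by rewrite !glue_constt // cpq ?constt_pcore.
apply/(cyclic_pair_nilP nilH (glue_mem xG) (glue_mem yG))/(cyclic_pair_nilP nilG xG yG).
  by move=> cp_g q q_pr; rewrite -cp_q ?cp_g.
by move=> cp_xy q q_pr; rewrite cp_q ?cp_xy.
Qed.

End PrimaryGluing.

Lemma nil_Sylow_cyc_graph_iso (gT hT : finGroupType) (G : {group gT}) (H : {group hT}) :
  nilpotent G -> nilpotent H -> #|G| = #|H| ->
  (forall p, prime p -> forall (P : {group gT}) (Q : {group hT}),
    P \in 'Syl_p(G) -> Q \in 'Syl_p(H) -> cyc_graph_iso P Q) ->
  cyc_graph_iso G H.
Proof.
move=> nilG nilH eqGH isoSyl.
have [iso isoP] : exists iso : nat -> gT -> hT,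
    forall p, prime p -> cyclic_pair_iso 'O_p(G) 'O_p(H) (iso p).
  apply: (choice (fun p f => prime p -> cyclic_pair_iso 'O_p(G) 'O_p(H) f)) => p.
  have [p_pr | _] := boolP (prime p); last by exists (fun=> 1).
  have [||f isof] := @pair_iso_of_cyc_graph_iso _ _ 'O_p(G) 'O_p(H); last by exists f.
    by apply: (isoSyl p p_pr); rewrite ?inE ?nilpotent_pcore_Hall.
  by rewrite !(card_Hall (nilpotent_pcore_Hall p _)) // eqGH.
exact: cyc_graph_iso_of_pair_iso (glue_pair_iso nilG nilH eqGH isoP).
Qed.

Theorem theorem4 (gT hT : finGroupType) (G : {group gT}) (H : {group hT}) :
  nilpotent G -> #|G| = #|H| ->
  (cyc_graph_iso G H <->
   (nilpotent H /\
    forall p : nat, prime p ->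
      forall (P : {group gT}) (Q : {group hT}),
        P \in 'Syl_p(G) -> Q \in 'Syl_p(H) -> cyc_graph_iso P Q)).
Proof.
move=> nilG eqGH; split; first exact: cyc_graph_iso_nil_Sylow.
by case=> nilH isoSyl; apply: nil_Sylow_cyc_graph_iso.
Qed.
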